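(* A prime tournament $G$ with $|V(G)| \ge 3$ does not have a subtournament isomorphic to $D_4$ if and only if $G$ is isomorphic to $T_n$ for some odd $n \ge 3$.
   Context: A tournament is a finite, non-null, loopless directed graph in which for any two distinct vertices $u,v$ there is exactly one edge with both ends in $\{u,v\}$; write $u\to v$ for the edge from $u$ to $v$. A subtournament is the tournament induced on a nonempty vertex subset. A homogeneous set of $G$ is a set $X\subseteq V(G)$ such that each $v\in V(G)\setminus X$ either has $v\to x$ for all $x\in X$ or $x\to v$ for all $x \in X$; $G$ is prime if every homogeneous set $X$ has $|X|\le 1$ or $X=V(G)$. $D_4$ is the 4-vertex tournament consisting of a cyclic triangle $C$ and a vertex $v$ with $v \to c$ for every vertex $c$ of $C$. For $n=2k+1$, $T_n$ is the tournament on $v_1,\dots,v_n$ with $v_i\to v_j$ iff $j\equiv i+1,\dots,i+k \pmod n$. *)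

From mathcomp Require Import all_boot.

Set Implicit Arguments. Unset Strict Implicit. Unset Printing Implicit Defensive.

(* A tournament on a finite (nonempty) vertex type T given by its edge relation
   [adj u v] meaning u -> v. *)
Definition is_tournament (T : finType) (adj : rel T) : Prop :=
  0 < #|T| /\
  (forall u, ~~ adj u u) /\
  (forall u v, u != v -> adj u v (+) adj v u).

Definition homogeneous (T : finType) (adj : rel T) (X : {set T}) : Prop :=
  forall v, v \notin X ->
    (forall x, x \in X -> adj v x) \/ (forall x, x \in X -> adj x v).

Definition prime_tournament (T : finType) (adj : rel T) : Prop :=
  forall X : {set T}, homogeneous adj X -> #|X| <= 1 \/ X = [set: T].

Definition tourn_iso (T1 T2 : finType) (a1 : rel T1) (a2 : rel T2) (f : T1 -> T2) : Prop :=
  bijective f /\ forall u v, a1 u v = a2 (f u) (f v).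

Definition isomorphic (T1 T2 : finType) (a1 : rel T1) (a2 : rel T2) : Prop :=
  exists f : T1 -> T2, tourn_iso a1 a2 f.

Definition has_subtournament (T1 T2 : finType) (a1 : rel T1) (a2 : rel T2) : Prop :=
  exists f : T1 -> T2, injective f /\ forall u v, a1 u v = a2 (f u) (f v).

(* D_4 : vertices 0,1,2 form the cyclic triangle 0->1->2->0, vertex 3 -> all. *)
Definition D4_adj : rel 'I_4 := fun u v =>
  ((val u == 0) && (val v == 1)) || ((val u == 1) && (val v == 2))
  || ((val u == 2) && (val v == 0)) || ((val u == 3) && (val v != 3)).

(* T_n for n = 2k+1 : v_i -> v_j iff j = i+1, ..., i+k (mod n); vertices
   indexed 0..n-1. *)
Definition Tn_adj (n : nat) : rel 'I_n := fun u v =>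
  let d := (v + n - u) %% n in (1 <= d) && (d <= n./2).
Arguments Tn_adj n : clear implicits.

From mathcomp Require Import all_boot zify.
Set Implicit Arguments. Unset Strict Implicit. Unset Printing Implicit Defensive.

(* In a D4-free tournament no out-neighbourhood contains a cyclic triangle,
   so a vertex u with an out-neighbour has one, tsucc u, beating all its other
   out-neighbours. In a prime tournament tsucc is injective and its orbits are
   homogeneous, so tsucc is a single cycle through the n vertices. The
   out-neighbourhood of y is an initial arc tsucc y, ..., tsucc^d y of this
   cycle; primality applied to {y, tsucc y} makes d non-decreasing, hence
   constant, along the cycle, which forces n = 2d + 1 and identifies the
   tournament with T_n. Conversely, in T_n the circular distance from v strictly
   increases along every edge between out-neighbours of v, so v dominates no
   cyclic triangle. *)

Definition circ_dist n (u w : 'I_n) : nat := (w + n - u) %% n.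

Lemma circ_distE n (u w : 'I_n) :
  circ_dist u w = if u <= w then w - u else w + n - u.
Proof.
rewrite /circ_dist; case: u w => [u hu] [w hw] /=; case: ifP => h.
  have -> : w + n - u = (w - u) + n by lia.
  rewrite modnDr modn_small //; lia.
rewrite modn_small //; lia.
Qed.

Lemma circ_dist_lt n (u w : 'I_n) : circ_dist u w < n.
Proof. by rewrite /circ_dist ltn_mod (leq_ltn_trans _ (ltn_ord u)). Qed.

Lemma Tn_adjE n (u w : 'I_n) : Tn_adj n u w = (0 < circ_dist u w <= n./2).
Proof. by []. Qed.

Lemma iter_circ_dist (X : Type) (f : X -> X) n x (a b : 'I_n) :
  iter n f x = x -> iter (circ_dist a b) f (iter a f x) = iter b f x.
Proof.
move=> fnx; rewrite circ_distE -iterD.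
case: leqP => ab; first by rewrite subnK.
by rewrite subnK ?iterD ?fnx //; case: a b ab => [a ha] [b hb] /=; lia.
Qed.

Lemma Tn_circ_dist_lt n (v a b : 'I_n) :
  Tn_adj n v a -> Tn_adj n v b -> Tn_adj n a b -> circ_dist v a < circ_dist v b.
Proof.
rewrite !Tn_adjE !circ_distE.
have : n./2 + n./2 <= n by rewrite -[X in _ <= X](odd_double_half n) addnn leq_addl.
case: v a b => [v hv] [a ha] [b hb] /=.
by case: (leqP v a); case: (leqP v b); case: (leqP a b); lia.
Qed.

Lemma Tn_D4_free n : ~ has_subtournament D4_adj (Tn_adj n).
Proof.
move=> [h [_ hD4]].
pose o i (lt_i4 : i < 4) := Ordinal lt_i4.
have lt i j : D4_adj (o 3 isT) i -> D4_adj (o 3 isT) j -> D4_adj i j ->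
    circ_dist (h (o 3 isT)) (h i) < circ_dist (h (o 3 isT)) (h j).
  by rewrite !hD4; apply: Tn_circ_dist_lt.
have := lt (o 0 isT) (o 1 isT) isT isT isT.
have := lt (o 1 isT) (o 2 isT) isT isT isT.
have := lt (o 2 isT) (o 0 isT) isT isT isT.
lia.
Qed.

Lemma has_subtournament_iso (T1 T2 T3 : finType) (a1 : rel T1) (a2 : rel T2) (a3 : rel T3) :
  has_subtournament a1 a2 -> isomorphic a2 a3 -> has_subtournament a1 a3.
Proof.
move=> [g [g_inj hg]] [f [/bij_inj f_inj hf]].
by exists (f \o g); split=> [|u v]; [apply: inj_comp | rewrite hg hf].
Qed.

Lemma D4_tournament : is_tournament D4_adj.
Proof.
split; first by rewrite card_ord.
split; first by case=> [[|[|[|[|i]]]] hi].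
by case=> [[|[|[|[|i]]]] hi] [[|[|[|[|j]]]] hj].
Qed.

Lemma tournament_hom_inj (T1 T2 : finType) (a1 : rel T1) (a2 : rel T2) (f : T1 -> T2) :
  is_tournament a1 -> (forall u, ~~ a2 u u) ->
  (forall u v, a1 u v = a2 (f u) (f v)) -> injective f.
Proof.
move=> [_ [_ a1_total]] a2_irr hom_f u v fuv; apply/eqP/negP=> /negP/a1_total.
by rewrite !hom_f fuv (negbTE (a2_irr _)).
Qed.

Section Tournament.

Variables (T : finType) (adj : rel T).
Hypothesis adj_tournament : is_tournament adj.

Lemma adj_irrefl u : ~~ adj u u.
Proof. by case: adj_tournament => _ []. Qed.

Lemma adj_neq u v : adj u v -> u != v.
Proof. by apply: contraTneq => ->; apply: adj_irrefl. Qed.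

Lemma adj_asym u v : adj u v -> ~~ adj v u.
Proof.
move=> uv; case: adj_tournament => _ [_ /(_ u v (adj_neq uv))].
by rewrite uv.
Qed.

Lemma adj_total u v : u != v -> ~~ adj u v -> adj v u.
Proof.
move=> neq_uv; case: adj_tournament => _ [_ /(_ u v neq_uv)].
by case: (adj u v).
Qed.

Lemma prime_out_neighbour u :
  prime_tournament adj -> 3 <= #|T| -> exists w, adj u w.
Proof.
move=> adj_prime card_T.
have [/existsP //|/existsPn no_out] := boolP [exists w, adj u w].
have : homogeneous adj [set~ u].
  move=> v; rewrite !inE negbK => /eqP ->; right=> x; rewrite !inE => xu.
  by apply: adj_total (no_out x); rewrite eq_sym.
case/adj_prime => [|/setP/(_ u)]; last by rewrite !inE eqxx.
by rewrite cardsC1; lia.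
Qed.

Lemma D4_of_dominated_cyclic_triangle v a b c :
  adj v a -> adj v b -> adj v c -> adj a b -> adj b c -> adj c a ->
  has_subtournament D4_adj adj.
Proof.
move=> va vb vc ab bc ca.
pose f (i : 'I_4) := match val i with 0 => a | 1 => b | 2 => c | _ => v end.
have hom_f i j : D4_adj i j = adj (f i) (f j).
  case: i j => [[|[|[|[|i]]]] hi] [[|[|[|[|j]]]] hj] //=; rewrite /D4_adj /f /=;
  by rewrite ?(negbTE (adj_asym va), negbTE (adj_asym vb), negbTE (adj_asym vc),
    negbTE (adj_asym ab), negbTE (adj_asym bc), negbTE (adj_asym ca),
    negbTE (adj_irrefl a), negbTE (adj_irrefl b), negbTE (adj_irrefl c),
    negbTE (adj_irrefl v), va, vb, vc, ab, bc, ca).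
exists f; split=> //.
exact: tournament_hom_inj D4_tournament adj_irrefl hom_f.
Qed.

Definition out_source u x :=
  adj u x && [forall w, adj u w && (w != x) ==> adj x w].

Definition tsucc u := odflt u [pick x | out_source u x].

Definition out_span y : nat := \max_(t < #|T| | adj y (iter t tsucc y)) t.

Section D4Free.

Hypothesis D4_free : ~ has_subtournament D4_adj adj.

(* The out-neighbourhood of u contains no cyclic triangle, so an out-neighbour
   x of u dominating the most out-neighbours of u dominates all the others. *)
Lemma out_source_exists u w0 : adj u w0 -> exists x, out_source u x.
Proof.
move=> uw0; pose common x := #|[set z | adj u z && adj x z]|.
have [x ux x_max] := @arg_maxnP T w0 (adj u) common uw0.
exists x; rewrite /out_source ux; apply/forallP=> w; apply/implyP=> /andP[uw wx].
apply/negPn/negP=> xw; have wx' : adj w x by apply: adj_total; rewrite // eq_sym.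
suff : common x < common w by move: (x_max w uw); lia.
apply: proper_card; apply/properP; split.
  apply/subsetP=> z; rewrite !inE => /andP[uz xz]; rewrite uz /=.
  apply/negPn/negP=> wz; apply: D4_free.
  apply: (D4_of_dominated_cyclic_triangle uw ux uz wx' xz).
  by apply: adj_total wz; apply: contraNneq xw => ->.
by exists x; rewrite !inE ux ?wx' ?adj_irrefl.
Qed.

Section Prime.

Hypotheses (adj_prime : prime_tournament adj) (card_T : 3 <= #|T|).

Lemma tsuccP u : out_source u (tsucc u).
Proof.
rewrite /tsucc; case: pickP => [//|no_source].
have [w0 uw0] := prime_out_neighbour u adj_prime card_T.
by have [x] := out_source_exists uw0; rewrite no_source.
Qed.

Lemma adj_tsucc u : adj u (tsucc u).
Proof. by case/andP: (tsuccP u). Qed.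

Lemma tsucc_dominates u w : adj u w -> w != tsucc u -> adj (tsucc u) w.
Proof. by case/andP: (tsuccP u) => _ /forallP/(_ w) + uw wx; rewrite uw wx. Qed.

Lemma adj_of_adj_tsucc u w : w != u -> adj w (tsucc u) -> adj w u.
Proof.
move=> wu ws; have [//|/(adj_total wu) uw] := boolP (adj w u).
by have /adj_asym := tsucc_dominates uw (adj_neq ws); rewrite ws.
Qed.

Lemma tsucc_inj : injective tsucc.
Proof.
suff no_merge u w : adj u w -> tsucc u != tsucc w.
  move=> u w /eqP; apply: contraTeq => neq_uw.
  have [uw|/(adj_total neq_uw) wu] := boolP (adj u w); first exact: no_merge.
  by rewrite eq_sym no_merge.
move=> uw; apply/eqP=> e; have ws := adj_tsucc w; rewrite -e in ws.
by have /adj_asym := tsucc_dominates uw (adj_neq ws); rewrite ws.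
Qed.

Lemma homogeneous_tsucc_orbit u : homogeneous adj [set y | fconnect tsucc u y].
Proof.
set X := [set y | fconnect tsucc u y].
have X_iter i y : y \in X -> iter i tsucc y \in X.
  by rewrite !inE => uy; apply: connect_trans uy (fconnect_iter _ _ _).
have X_in_orbit x y : x \in X -> y \in X -> exists i, x = iter i tsucc y.
  rewrite !inE => ux; rewrite (fconnect_sym tsucc_inj) => yu.
  by exists (findex tsucc y x); rewrite iter_findex //; apply: connect_trans yu ux.
move=> v vX; have [/existsP[x /andP[xX vx]]|/existsPn no_in] := boolP [exists x in X, adj v x].
  left=> y yX; have [i exy] := X_in_orbit x y xX yX; rewrite {}exy in vx.
  elim: i vx => [//|i IH]; rewrite iterS => v_succ; apply/IH/(adj_of_adj_tsucc _ v_succ).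
  by apply: contraNneq vX => ->; apply: X_iter.
right=> x xX; apply: adj_total; first by apply: contraNneq vX => ->.
by move: (no_in x); rewrite xX.
Qed.

Lemma fconnect_tsucc u y : fconnect tsucc u y.
Proof.
have [card_X|/setP/(_ y)] := adj_prime (homogeneous_tsucc_orbit (u := u)); last first.
  by rewrite !inE.
suff : #|[set u; tsucc u]| <= 1 by rewrite cards2 (adj_neq (adj_tsucc u)).
apply: leq_trans card_X; apply: subset_leq_card.
by rewrite subUset !sub1set !inE connect0 fconnect1.
Qed.

Lemma order_tsucc y : order tsucc y = #|T|.
Proof. by apply: eq_card => z; rewrite -topredE /= fconnect_tsucc. Qed.

Lemma iter_tsucc_card y : iter #|T| tsucc y = y.
Proof. by rewrite -{1}(order_tsucc y) iter_order //; apply: tsucc_inj. Qed.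

Lemma iter_tsucc_neq y t : 0 < t < #|T| -> iter t tsucc y != y.
Proof.
case/andP=> t_gt0 t_lt; apply/eqP=> e.
have := findex_iter (f:=tsucc) (x:=y) (i:=t); rewrite order_tsucc e findex0 => /(_ t_lt).
by move=> t0; rewrite -t0 in t_gt0.
Qed.

Lemma adj_iter_tsucc_down y t t' : 0 < t <= t' -> t' < #|T| ->
  adj y (iter t' tsucc y) -> adj y (iter t tsucc y).
Proof.
case/andP=> t_gt0 /subnK <-; elim: (t' - t) => [//|k IH] lt_kt.
rewrite addSn iterS => y_succ; apply: IH; first lia.
by apply: adj_of_adj_tsucc y_succ; rewrite eq_sym iter_tsucc_neq //; lia.
Qed.

Lemma adj_iter_tsucc y t : t < #|T| -> adj y (iter t tsucc y) = (0 < t <= out_span y).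
Proof.
move=> t_lt; apply/idP/andP => [yt|[t_gt0 t_le]].
  split; first by case: t t_lt yt => // _; rewrite (negbTE (adj_irrefl y)).
  exact: (leq_bigmax_cond (Ordinal t_lt)).
have [|i yi span_i] := @eq_bigmax_cond _ (fun i : 'I_#|T| => adj y (iter i tsucc y)) val.
  by apply/card_gt0P; exists (Ordinal (ltnW card_T)); apply: adj_tsucc.
rewrite /out_span span_i in t_le.
by apply: adj_iter_tsucc_down yi; rewrite ?t_gt0.
Qed.

(* If out_span (tsucc y) < out_span y, then {y, tsucc y} is a homogeneous
   set: a vertex beaten by y is beaten by tsucc y, and a vertex s^t y beating
   y (t > out_span y) also beats tsucc y = s^(t-1) y. *)
Lemma out_span_le_tsucc y : out_span y <= out_span (tsucc y).
Proof.
rewrite leqNgt; apply/negP=> span_lt.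
have ys := adj_tsucc y.
suff /adj_prime : homogeneous adj [set y; tsucc y].
  rewrite cards2 (adj_neq ys) => -[//|X_full].
  by move: card_T; rewrite -cardsT -X_full cards2 (adj_neq ys).
move=> v; rewrite !inE negb_or => /andP[vy vsy].
have [yv|nyv] := boolP (adj y v).
  by right=> x; rewrite !inE => /orP[]/eqP->; last exact: tsucc_dominates.
left=> x; rewrite !inE => /orP[]/eqP->; first by apply: adj_total nyv; rewrite eq_sym.
have [t t_lt ev] : exists2 t, t < #|T| & iter t tsucc y = v.
  exists (findex tsucc y v); last exact/iter_findex/fconnect_tsucc.
  by rewrite -(order_tsucc y) findex_max // fconnect_tsucc.
move: vy vsy nyv; rewrite -ev; case: t t_lt {ev} => [|[|t]] t_lt; [by rewrite /= eqxx.. | move=> _ _].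
rewrite adj_iter_tsucc // iterSr => span_t.
apply: adj_total; first by rewrite eq_sym iter_tsucc_neq //; lia.
rewrite adj_iter_tsucc; lia.
Qed.

Lemma out_span_const y z : out_span y = out_span z.
Proof.
suff span_le u w : out_span u <= out_span w by apply/eqP; rewrite eqn_leq !span_le.
rewrite -(iter_findex (fconnect_tsucc u w)).
elim: (findex _ u w) => [//|i IH]; rewrite iterS; apply: leq_trans IH _.
exact: out_span_le_tsucc.
Qed.

(* With d = out_span: y beats z = s^d y, and y = s^(n-d) z, so n - d > d;
   y does not beat z' = s^(d+1) y, and y = s^(n-d-1) z', so n - d - 1 <= d. *)
Lemma card_out_span y : #|T| = (out_span y).*2.+1.
Proof.
set d := out_span y.
have span_d z : out_span z = d by apply: out_span_const.
have d_gt0 : 0 < d.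
  by move: (adj_tsucc y); rewrite -[tsucc y]/(iter 1 tsucc y) adj_iter_tsucc //; lia.
have d_lt : d.+1 < #|T|.
  have pred_y : tsucc (iter #|T|.-1 tsucc y) = y.
    by rewrite -iterS prednK ?iter_tsucc_card //; lia.
  have := adj_tsucc (iter #|T|.-1 tsucc y); rewrite pred_y => /adj_asym.
  by rewrite adj_iter_tsucc; lia.
have adj_to_y t : 0 < t < #|T| -> adj (iter t tsucc y) y = (0 < #|T| - t <= d).
  move=> /andP[t_gt0 t_lt]; rewrite -{2}(iter_tsucc_card y) -{1}(subnK (ltnW t_lt)).
  by rewrite iterD adj_iter_tsucc ?span_d //; lia.
have zy : ~~ adj (iter d tsucc y) y.
  by apply: adj_asym; rewrite adj_iter_tsucc ?d_gt0 //; lia.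
have z'y : adj (iter d.+1 tsucc y) y.
  apply: adj_total; last by rewrite adj_iter_tsucc ?ltnn ?andbF.
  by rewrite eq_sym iter_tsucc_neq //; lia.
by move: zy z'y; rewrite !adj_to_y; lia.
Qed.

Lemma out_span_half y : out_span y = #|T|./2.
Proof. by rewrite (card_out_span y) /= uphalf_double. Qed.

Lemma odd_card : odd #|T|.
Proof.
have [y _] : exists y : T, y \in T by apply/card_gt0P; apply: leq_trans card_T.
by rewrite (card_out_span y) /= odd_double.
Qed.

Lemma isomorphic_Tn : isomorphic adj (Tn_adj #|T|).
Proof.
have [u0 _] : exists u0 : T, u0 \in T by apply/card_gt0P; apply: leq_trans card_T.
have idx_lt y : findex tsucc u0 y < #|T|.
  by rewrite -(order_tsucc u0) findex_max // fconnect_tsucc.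
pose f y := Ordinal (idx_lt y).
have f_iter y : iter (f y) tsucc u0 = y by apply/iter_findex/fconnect_tsucc.
exists f; split.
  exists (fun i : 'I_#|T| => iter i tsucc u0) => [//|i].
  by apply: val_inj; rewrite /= findex_iter // order_tsucc.
move=> y z; have y_to_z : iter (circ_dist (f y) (f z)) tsucc y = z.
  by rewrite -{2}(f_iter y) iter_circ_dist ?iter_tsucc_card ?f_iter.
by rewrite -{1}y_to_z adj_iter_tsucc ?circ_dist_lt // Tn_adjE out_span_half.
Qed.

End Prime.

End D4Free.

End Tournament.

Theorem theorem3p8 (T : finType) (adj : rel T) :
  is_tournament adj -> prime_tournament adj -> 3 <= #|T| ->
  (~ has_subtournament D4_adj adj <->
   exists n : nat, [/\ odd n, 3 <= n & isomorphic adj (Tn_adj n)]).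
Proof.
move=> adj_tournament adj_prime card_T.
split=> [D4_free | [n [_ _ iso_Tn]] D4_sub].
  exists #|T|; split=> //; first exact: odd_card D4_free adj_prime card_T.
  exact: isomorphic_Tn D4_free adj_prime card_T.
exact: Tn_D4_free (has_subtournament_iso D4_sub iso_Tn).
Qed.
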